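(* Let $\omega$ be a rectilinearly-convex obstacle and let $S^*$ be a skeleton for $\omega$. Then for each of the four extreme edges $e_i$ ($1\le i\le 4$) of $\omega$ there exists an edge in $S^*$ with an endpoint on $e_i$.
   Context: An obstacle $\omega$ is a simple polygon in $\mathbb{R}^2$ (a closed, bounded polygonal region without holes whose boundary does not intersect itself), assumed in general position (no three of its vertices are collinear); edges of $\omega$ are those of its boundary. $\omega$ is rectilinear if each edge is horizontal or vertical, and a rectilinear obstacle is rectilinearly-convex if any two points of $\omega$ can be joined by a shortest rectilinear path (made of horizontal and vertical segments, of minimum $\ell_1$ length) contained in $\omega$. A corner point of a rectilinear path is a point where a horizontal and a vertical segment of the path meet. A set $S$ of closed line segments is inside $\omega$ if the union of its elements is contained in $\omega$. Such an $S$ is a skeleton for $\omega$ if for every pair of points $p,q$ not in the interior of $\omega$ such that every shortest rectilinear path between $p$ and $q$ with at most one corner point meets the interior of $\omega$, each such path intersects some element of $S$. The bounding box $B(\omega)$ is the smallest closed axis-parallel rectangle containing $\omega$; the extreme edges of $\omega$ are the edges of $\omega$ lying on the boundary of $B(\omega)$ (a rectilinearly-convex obstacle has exactly four: left, right, bottom, top). *)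

From Stdlib Require Import Reals List.
Import ListNotations.
Open Scope R_scope.

Definition pt := (R * R)%type.
Definition region := pt -> Prop.

Definition seg (a b : pt) : region := fun p =>
  exists t, 0 <= t <= 1 /\
    p = (fst a + t * (fst b - fst a), snd a + t * (snd b - snd a)).

Definition dist2 (p q : pt) : R := (fst p - fst q) ^ 2 + (snd p - snd q) ^ 2.
Definition interior (A : region) : region := fun p =>
  exists e, 0 < e /\ forall q, dist2 p q < e ^ 2 -> A q.
Definition closure (A : region) : region := fun p =>
  forall e, 0 < e -> exists q, dist2 p q < e ^ 2 /\ A q.
Definition frontier (A : region) : region := fun p => closure A p /\ ~ interior A p.
Definition closed_set (A : region) : Prop := forall p, closure A p -> A p.
Definition bounded_set (A : region) : Prop :=
  exists M, forall p, A p -> Rabs (fst p) <= M /\ Rabs (snd p) <= M.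

(** Polygon given by its cyclic list of vertices V = [v_0; ...; v_{n-1}];
    edge i joins v_i and v_{i+1 mod n}. *)
Definition vtx (V : list pt) (i : nat) : pt := nth (i mod length V) V (0, 0).
Definition edge_of (V : list pt) (i : nat) : region := seg (vtx V i) (vtx V (S i)).

Definition simple_polygon (V : list pt) : Prop :=
  (3 <= length V)%nat /\
  forall i j, (i < j < length V)%nat -> forall p,
    edge_of V i p -> edge_of V j p ->
    (j = S i /\ p = vtx V j) \/ (i = 0%nat /\ j = (length V - 1)%nat /\ p = vtx V 0).

Definition collinear (a b c : pt) : Prop :=
  (fst b - fst a) * (snd c - snd a) - (snd b - snd a) * (fst c - fst a) = 0.

Definition general_position (V : list pt) : Prop :=
  forall i j k, (i < length V)%nat -> (j < length V)%nat -> (k < length V)%nat ->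
    i <> j -> j <> k -> i <> k -> ~ collinear (vtx V i) (vtx V j) (vtx V k).

Definition is_obstacle (V : list pt) (w : region) : Prop :=
  simple_polygon V /\ general_position V /\
  closed_set w /\ bounded_set w /\ (exists p, interior w p) /\
  (forall p, frontier w p <-> exists i, (i < length V)%nat /\ edge_of V i p).

Definition rectilinear (V : list pt) : Prop :=
  forall i, (i < length V)%nat ->
    fst (vtx V i) = fst (vtx V (S i)) \/ snd (vtx V i) = snd (vtx V (S i)).

(** Rectilinear paths: a start point a followed by the list l of the
    successive points; consecutive points are joined by horizontal or
    vertical segments. The path ends at [last l a]. *)
Definition axis_aligned (a b : pt) : Prop := fst a = fst b \/ snd a = snd b.

Fixpoint rpath_ok (a : pt) (l : list pt) : Prop :=
  match l with [] => True | b :: l' => axis_aligned a b /\ rpath_ok b l' end.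

Fixpoint rpath_len (a : pt) (l : list pt) : R :=
  match l with
  | [] => 0
  | b :: l' => Rabs (fst a - fst b) + Rabs (snd a - snd b) + rpath_len b l'
  end.

Fixpoint rpath_pts (a : pt) (l : list pt) : region :=
  match l with
  | [] => fun x => x = a
  | b :: l' => fun x => seg a b x \/ rpath_pts b l' x
  end.

Fixpoint rpath_segs (a : pt) (l : list pt) : list (pt * pt) :=
  match l with [] => [] | b :: l' => (a, b) :: rpath_segs b l' end.

Definition rpath_between (p q : pt) (l : list pt) : Prop :=
  rpath_ok p l /\ last l p = q.

Definition shortest_rpath (p q : pt) (l : list pt) : Prop :=
  rpath_between p q l /\
  forall l', rpath_between p q l' -> rpath_len p l <= rpath_len p l'.

Definition hseg (s : pt * pt) : Prop := snd (fst s) = snd (snd s) /\ fst (fst s) <> fst (snd s).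
Definition vseg (s : pt * pt) : Prop := fst (fst s) = fst (snd s) /\ snd (fst s) <> snd (snd s).

Definition corner_point (a : pt) (l : list pt) (c : pt) : Prop :=
  exists s1 s2, In s1 (rpath_segs a l) /\ In s2 (rpath_segs a l) /\
    hseg s1 /\ vseg s2 /\
    (c = fst s1 \/ c = snd s1) /\ (c = fst s2 \/ c = snd s2).

Definition at_most_one_corner (a : pt) (l : list pt) : Prop :=
  forall c1 c2, corner_point a l c1 -> corner_point a l c2 -> c1 = c2.

Definition rect_convex (V : list pt) (w : region) : Prop :=
  rectilinear V /\
  forall p q, w p -> w q ->
    exists l, shortest_rpath p q l /\ forall x, rpath_pts p l x -> w x.

(** Sets of closed segments, given as finite lists of endpoint pairs. *)
Definition seg_of (s : pt * pt) : region := seg (fst s) (snd s).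

Definition inside (w : region) (S : list (pt * pt)) : Prop :=
  forall s x, In s S -> seg_of s x -> w x.

Definition skeleton (w : region) (S : list (pt * pt)) : Prop :=
  inside w S /\
  forall p q, ~ interior w p -> ~ interior w q ->
    (forall l, shortest_rpath p q l -> at_most_one_corner p l ->
       exists x, rpath_pts p l x /\ interior w x) ->
    forall l, shortest_rpath p q l -> at_most_one_corner p l ->
      exists s x, In s S /\ seg_of s x /\ rpath_pts p l x.

Definition rect (x1 x2 y1 y2 : R) : region := fun p =>
  x1 <= fst p <= x2 /\ y1 <= snd p <= y2.

Definition is_bbox (w : region) (x1 x2 y1 y2 : R) : Prop :=
  (forall p, w p -> rect x1 x2 y1 y2 p) /\
  forall a b c d, (forall p, w p -> rect a b c d p) ->
    forall p, rect x1 x2 y1 y2 p -> rect a b c d p.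

Definition extreme_edge (V : list pt) (w : region) (i : nat) : Prop :=
  (i < length V)%nat /\
  exists x1 x2 y1 y2, is_bbox w x1 x2 y1 y2 /\
    forall p, edge_of V i p -> frontier (rect x1 x2 y1 y2) p.

(* Choose coordinates in which the extreme edge [a,b] is the top side of the
   bounding box, at height H.  General position forces both edges adjacent to
   [a,b] to be vertical and to go down, so for every height Y slightly below H
   the horizontal chord joining them has both ends on the boundary.  By
   rectilinear convexity the whole thin strip under [a,b] lies in the obstacle,
   so each chord crosses the interior; being a one-segment shortest path, it
   must meet the skeleton.  If all (finitely many) skeleton endpoints lay below
   H, chords close enough to H would miss every skeleton segment; hence some
   endpoint lies at height H, and by general position the only points of the
   obstacle at height H are those of [a,b]. *)

From Stdlib Require Import Reals List Lia Lra Classical.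
(* After Reals, whose [Rtopology] also defines [interior] and [closed_set]. *)
Import ListNotations.
Open Scope R_scope.

Lemma last_cons (b a : pt) (l : list pt) : last (b :: l) a = last l b.
Proof.
  revert a b; induction l as [|x l IH]; intros a b; [reflexivity|].
  change (last (x :: l) a = last (x :: l) b). rewrite !IH. reflexivity.
Qed.

Lemma axis_aligned_sym a b : axis_aligned a b -> axis_aligned b a.
Proof. unfold axis_aligned; intuition. Qed.

Lemma seg_start a b : seg a b a.
Proof. exists 0. split; [lra|]. destruct a; simpl; f_equal; ring. Qed.

Lemma seg_end a b : seg a b b.
Proof. exists 1. split; [lra|]. destruct a, b; simpl; f_equal; ring. Qed.

Lemma seg_sym a b z : seg b a z -> seg a b z.
Proof. intros [t [Ht ->]]. exists (1 - t). split; [lra|]. f_equal; ring. Qed.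

Lemma seg_degenerate a z : seg a a z -> z = a.
Proof. intros [t [_ ->]]. destruct a; simpl; f_equal; ring. Qed.

Definition affine (f : pt -> R) : Prop := forall a b t,
  f (fst a + t * (fst b - fst a), snd a + t * (snd b - snd a)) = f a + t * (f b - f a).

Definition between (x y c : R) : Prop := x <= c <= y \/ y <= c <= x.

Lemma between_step x y z c : between x z c -> ~ between x y c -> between y z c.
Proof. unfold between; intros. destruct (Rle_dec y z); intuition lra. Qed.

Section AffineAlongSegments.
Variable f : pt -> R.
Hypothesis f_affine : affine f.

Lemma seg_affine a b z : seg a b z -> exists t, 0 <= t <= 1 /\ f z = f a + t * (f b - f a).
Proof. intros [t [Ht ->]]. exists t. split; [exact Ht|apply f_affine]. Qed.

Lemma seg_affine_le a b z M : seg a b z -> f a <= M -> f b <= M -> f z <= M.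
Proof. intros Hz Ha Hb. destruct (seg_affine a b z Hz) as [t [Ht ->]]. nra. Qed.

Lemma seg_affine_max_cases a b z M : seg a b z -> f a <= M -> f b <= M -> f z = M ->
  (f a = M /\ f b = M) \/ z = a \/ z = b.
Proof.
  intros Hz Ha Hb HzM. pose proof Hz as [t [Ht Ez]].
  assert (Hf : f z = f a + t * (f b - f a)) by (rewrite Ez; apply f_affine).
  destruct (Req_dec (f a) M), (Req_dec (f b) M); [left; auto|right..].
  - assert (t = 0) by nra. subst t. left. rewrite Ez. destruct a; simpl; f_equal; ring.
  - assert (t = 1) by nra. subst t. right. rewrite Ez. destruct a, b; simpl; f_equal; ring.
  - assert (t = 1) by nra. subst t. right. rewrite Ez. destruct a, b; simpl; f_equal; ring.
Qed.

Lemma seg_ivt a b c : between (f a) (f b) c -> exists z, seg a b z /\ f z = c.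
Proof.
  intros Hc. destruct (Req_dec (f a) (f b)) as [E|E].
  - exists a. split; [apply seg_start|]. unfold between in Hc; lra.
  - set (t := (c - f a) / (f b - f a)).
    assert (Ht : t * (f b - f a) = c - f a) by (unfold t; field; lra).
    exists (fst a + t * (fst b - fst a), snd a + t * (snd b - snd a)). split.
    + exists t. split; [|reflexivity].
      unfold between in Hc. destruct (Rle_dec (f a) (f b)); split; nra.
    + rewrite f_affine. lra.
Qed.

Lemma rpath_ivt l a c : between (f a) (f (last l a)) c -> exists z, rpath_pts a l z /\ f z = c.
Proof.
  revert a; induction l as [|b l IH]; intros a Hc.
  - exists a. split; [reflexivity|]. unfold between in Hc; simpl in Hc; lra.
  - rewrite last_cons in Hc.
    destruct (classic (between (f a) (f b) c)) as [Hab|Hab].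
    + destruct (seg_ivt a b c Hab) as [z [Hz Hfz]]. exists z. split; [left|]; assumption.
    + destruct (IH b (between_step _ _ _ _ Hc Hab)) as [z [Hz Hfz]].
      exists z. split; [right|]; assumption.
Qed.

End AffineAlongSegments.

Definition l1 (a b : pt) : R := Rabs (fst a - fst b) + Rabs (snd a - snd b).

Lemma l1_refl a : l1 a a = 0.
Proof. unfold l1. rewrite !Rminus_diag, Rabs_R0. ring. Qed.

Lemma Rabs_triangle_sub x y z : Rabs (x - z) <= Rabs (x - y) + Rabs (y - z).
Proof. replace (x - z) with ((x - y) + (y - z)) by ring. apply Rabs_triang. Qed.

Lemma l1_triangle a b c : l1 a c <= l1 a b + l1 b c.
Proof.
  unfold l1.
  pose proof (Rabs_triangle_sub (fst a) (fst b) (fst c)).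
  pose proof (Rabs_triangle_sub (snd a) (snd b) (snd c)). lra.
Qed.

Lemma l1_seg a b z : seg a b z -> l1 a z + l1 z b = l1 a b.
Proof.
  assert (split : forall x y t, 0 <= t <= 1 ->
    Rabs (x - (x + t * (y - x))) + Rabs (x + t * (y - x) - y) = Rabs (x - y)).
  { intros x y t Ht. unfold Rabs. repeat destruct Rcase_abs; nra. }
  intros [t [Ht ->]]. unfold l1; simpl.
  rewrite <- (split (fst a) (fst b) t Ht), <- (split (snd a) (snd b) t Ht). ring.
Qed.

Lemma rpath_len_ge_l1 l a : l1 a (last l a) <= rpath_len a l.
Proof.
  revert a; induction l as [|b l IH]; intros a.
  - simpl. rewrite l1_refl. lra.
  - rewrite last_cons. change (l1 a (last l b) <= l1 a b + rpath_len b l).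
    pose proof (IH b). pose proof (l1_triangle a b (last l b)). lra.
Qed.

Lemma rpath_len_through l a z : rpath_pts a l z -> l1 a z + l1 z (last l a) <= rpath_len a l.
Proof.
  revert a; induction l as [|b l IH]; intros a Hz.
  - simpl in *. subst. rewrite l1_refl. lra.
  - rewrite last_cons. change (l1 a z + l1 z (last l b) <= l1 a b + rpath_len b l).
    destruct Hz as [Hz|Hz].
    + pose proof (l1_seg _ _ _ Hz). pose proof (rpath_len_ge_l1 l b).
      pose proof (l1_triangle z b (last l b)). lra.
    + pose proof (IH b Hz). pose proof (l1_triangle a b z). lra.
Qed.

Lemma aligned_shortest_rpath p q : axis_aligned p q -> shortest_rpath p q [q].
Proof.
  intros Hpq. split; [split; [simpl; tauto|reflexivity]|].
  intros l [_ Hl]. pose proof (rpath_len_ge_l1 l p) as Hlen. rewrite Hl in Hlen.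
  unfold l1 in Hlen. simpl. lra.
Qed.

(* The one-segment path [q] has length [l1 p q], so no shortest path is longer. *)
Lemma shortest_rpath_aligned_geodesic p q l z : axis_aligned p q ->
  shortest_rpath p q l -> rpath_pts p l z -> l1 p z + l1 z q <= l1 p q.
Proof.
  intros Hpq [[_ Hl] Hmin] Hz.
  pose proof (Hmin [q] (proj1 (aligned_shortest_rpath p q Hpq))) as Hq.
  pose proof (rpath_len_through l p z Hz) as Hthrough. rewrite Hl in Hthrough.
  unfold l1 in *. simpl in Hq. lra.
Qed.

Lemma single_segment_at_most_one_corner p q : at_most_one_corner p [q].
Proof.
  intros c1 c2 [s1 [s2 [H1 [H2 [Hh [Hv _]]]]]]. exfalso.
  destruct H1 as [<-|[]], H2 as [<-|[]]. unfold hseg, vseg in *. simpl in *. tauto.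
Qed.

Lemma sum_sq_lt_abs x y r : 0 < r -> x ^ 2 + y ^ 2 < r ^ 2 -> Rabs x < r /\ Rabs y < r.
Proof.
  intros Hr H.
  assert (x * x < r * r) by (pose proof (pow2_ge_0 y); simpl in *; nra).
  assert (y * y < r * r) by (pose proof (pow2_ge_0 x); simpl in *; nra).
  split; unfold Rabs; destruct Rcase_abs; nra.
Qed.

Lemma finite_max_below {A : Type} (L : list A) (g : A -> R) M :
  (forall s, In s L -> g s < M) -> exists m, m < M /\ forall s, In s L -> g s <= m.
Proof.
  induction L as [|x L IH]; intros Hg.
  - exists (M - 1). split; [lra|]. intros s [].
  - destruct IH as [m [Hm Hs]]; [intros s Hs; apply Hg; right; exact Hs|].
    exists (Rmax (g x) m). split.
    + apply Rmax_lub_lt; [apply Hg; left|]; auto.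
    + intros s [<-|Hs']; [apply Rmax_l|].
      eapply Rle_trans; [apply Hs; exact Hs'|apply Rmax_r].
Qed.

Lemma mod_below_twice x n : (0 < n)%nat -> (x < 2 * n)%nat ->
  (x < n /\ x mod n = x \/ n <= x /\ x mod n = x - n)%nat.
Proof.
  intros Hn Hx. destruct (Nat.lt_ge_cases x n) as [Hlt|Hge].
  - left. split; [exact Hlt|apply Nat.mod_small, Hlt].
  - right. split; [exact Hge|].
    replace x with ((x - n) + 1 * n)%nat at 1 by lia.
    rewrite Nat.Div0.mod_add. apply Nat.mod_small. lia.
Qed.

Lemma neighbour_indices_distinct n i : (3 <= n)%nat -> (i < n)%nat ->
  (i mod n <> S i mod n /\ S i mod n <> S (S i) mod n /\ i mod n <> S (S i) mod n /\
   (i + (n - 1)) mod n <> i mod n /\ (i + (n - 1)) mod n <> S i mod n)%nat.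
Proof.
  intros Hn Hi.
  destruct (mod_below_twice i n) as [[? ->]|[? ->]]; try lia;
  destruct (mod_below_twice (S i) n) as [[? ->]|[? ->]]; try lia;
  destruct (mod_below_twice (S (S i)) n) as [[? ->]|[? ->]]; try lia;
  destruct (mod_below_twice (i + (n - 1)) n) as [[? ->]|[? ->]]; lia.
Qed.

Lemma vtx_mod V k : vtx V (k mod length V) = vtx V k.
Proof. unfold vtx. rewrite Nat.Div0.mod_mod. reflexivity. Qed.

Lemma vtx_S_mod V k : vtx V (S (k mod length V)) = vtx V (S k).
Proof.
  unfold vtx. replace (S (k mod length V)) with (k mod length V + 1)%nat by lia.
  rewrite Nat.Div0.add_mod_idemp_l, Nat.add_1_r. reflexivity.
Qed.

Lemma vtx_pred V i : (0 < length V)%nat -> vtx V (S (i + (length V - 1))) = vtx V i.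
Proof.
  intros Hn. unfold vtx. replace (S (i + (length V - 1))) with (i + 1 * length V)%nat by lia.
  rewrite Nat.Div0.mod_add. reflexivity.
Qed.

Lemma vtx_aligned V k : rectilinear V -> (0 < length V)%nat ->
  axis_aligned (vtx V k) (vtx V (S k)).
Proof.
  intros Hrect Hn. rewrite <- vtx_mod, <- vtx_S_mod. apply Hrect, Nat.mod_upper_bound. lia.
Qed.

Section Obstacle.
Variables (V : list pt) (w : region).
Hypothesis obstacle : is_obstacle V w.

Lemma obstacle_length : (3 <= length V)%nat.
Proof. apply obstacle. Qed.

Lemma frontier_on_edge p : frontier w p -> exists k, edge_of V k p.
Proof.
  intros Hp. destruct obstacle as (_ & _ & _ & _ & _ & Hfr).
  destruct (proj1 (Hfr p) Hp) as [k [_ Hk]]. exists k. exact Hk.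
Qed.

Lemma edge_frontier k p : edge_of V k p -> frontier w p.
Proof.
  intros Hk. pose proof obstacle_length as Hn. destruct obstacle as (_ & _ & _ & _ & _ & Hfr).
  apply Hfr. exists (k mod length V). split; [apply Nat.mod_upper_bound; lia|].
  unfold edge_of. rewrite vtx_mod, vtx_S_mod. exact Hk.
Qed.

Lemma edge_in_obstacle k p : edge_of V k p -> w p.
Proof. intros Hk. apply obstacle, (edge_frontier k p Hk). Qed.

Lemma edge_not_interior k p : edge_of V k p -> ~ interior w p.
Proof. intros Hk. apply (edge_frontier k p Hk). Qed.

Lemma vtx_in_obstacle k : w (vtx V k).
Proof. apply (edge_in_obstacle k), seg_start. Qed.

Lemma vtx_not_collinear i j k :
  (i mod length V <> j mod length V)%nat -> (j mod length V <> k mod length V)%nat ->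
  (i mod length V <> k mod length V)%nat -> ~ collinear (vtx V i) (vtx V j) (vtx V k).
Proof.
  intros Hij Hjk Hik. pose proof obstacle_length as Hn. destruct obstacle as (_ & Hgp & _).
  rewrite <- (vtx_mod V i), <- (vtx_mod V j), <- (vtx_mod V k).
  apply Hgp; try apply Nat.mod_upper_bound; lia.
Qed.

End Obstacle.

(* The four orientations of the plane in which a given side of the bounding
   box is the top side: [swap] exchanges the axes, [flip] reverses heights. *)
Section Orientation.
Variables swap flip : bool.

Definition height (p : pt) : R :=
  let y := if swap then fst p else snd p in if flip then - y else y.
Definition abscissa (p : pt) : R := if swap then snd p else fst p.
Definition point_at (x y : R) : pt :=
  let y' := if flip then - y else y in if swap then (y', x) else (x, y').

Ltac orient := unfold height, abscissa, point_at; destruct swap, flip; simpl.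

Lemma height_point_at x y : height (point_at x y) = y.
Proof. orient; ring. Qed.

Lemma abscissa_point_at x y : abscissa (point_at x y) = x.
Proof. orient; reflexivity. Qed.

Lemma point_at_coords p : point_at (abscissa p) (height p) = p.
Proof. destruct p; orient; f_equal; ring. Qed.

Lemma coords_inj p q : abscissa p = abscissa q -> height p = height q -> p = q.
Proof.
  intros Ha Hh. rewrite <- (point_at_coords p), <- (point_at_coords q), Ha, Hh. reflexivity.
Qed.

Lemma height_affine : affine height.
Proof. intros a b t; orient; ring. Qed.

Lemma abscissa_affine : affine abscissa.
Proof. intros a b t; orient; ring. Qed.

Lemma same_height_aligned a b : height a = height b -> axis_aligned a b.
Proof. unfold axis_aligned; orient; lra. Qed.

Lemma aligned_coords a b : axis_aligned a b -> abscissa a = abscissa b \/ height a = height b.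
Proof. unfold axis_aligned; orient; lra. Qed.

Lemma same_height_collinear a b c : height a = height b -> height b = height c -> collinear a b c.
Proof.
  unfold collinear; orient; intros Hab Hbc;
  [ replace (fst b) with (fst a) by lra; replace (fst c) with (fst a) by lra
  | replace (fst b) with (fst a) by lra; replace (fst c) with (fst a) by lra
  | replace (snd b) with (snd a) by lra; replace (snd c) with (snd a) by lra
  | replace (snd b) with (snd a) by lra; replace (snd c) with (snd a) by lra ]; ring.
Qed.

Lemma dist2_coords p q :
  dist2 p q = (abscissa p - abscissa q) ^ 2 + (height p - height q) ^ 2.
Proof. unfold dist2; orient; ring. Qed.

Lemma l1_coords p q : l1 p q = Rabs (abscissa p - abscissa q) + Rabs (height p - height q).
Proof.
  assert (Rabs_opp_sub : forall x y, Rabs (- x - - y) = Rabs (x - y)).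
  { intros x y. rewrite <- Rabs_Ropp. f_equal. ring. }
  unfold l1; orient; rewrite ?Rabs_opp_sub; ring.
Qed.

Lemma shortest_rpath_level p q l z : height p = height q ->
  shortest_rpath p q l -> rpath_pts p l z -> height z = height p.
Proof.
  intros Hpq Hsh Hz.
  pose proof (shortest_rpath_aligned_geodesic p q l z (same_height_aligned p q Hpq) Hsh Hz) as G.
  rewrite !l1_coords, Hpq, Rminus_diag, Rabs_R0 in G.
  pose proof (Rabs_triangle_sub (abscissa p) (abscissa z) (abscissa q)).
  rewrite Hpq. revert G H. unfold Rabs; repeat destruct Rcase_abs; intros; lra.
Qed.

Lemma shortest_rpath_covers_level_segment p q l m : height p = height q ->
  shortest_rpath p q l -> between (abscissa p) (abscissa q) m ->
  rpath_pts p l (point_at m (height p)).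
Proof.
  intros Hpq Hsh Hm. pose proof Hsh as [[_ Hlast] _].
  destruct (rpath_ivt abscissa abscissa_affine l p m) as [z [Hz Hza]]; [now rewrite Hlast|].
  replace (point_at m (height p)) with z; [exact Hz|].
  apply coords_inj; rewrite ?abscissa_point_at, ?height_point_at; [exact Hza|].
  exact (shortest_rpath_level p q l z Hpq Hsh Hz).
Qed.

Lemma interior_of_square (w : region) x y r : 0 < r ->
  (forall x' y', Rabs (x' - x) < r -> Rabs (y' - y) < r -> w (point_at x' y')) ->
  interior w (point_at x y).
Proof.
  intros Hr Hsq. exists r. split; [exact Hr|]. intros q Hq.
  rewrite dist2_coords, abscissa_point_at, height_point_at in Hq.
  destruct (sum_sq_lt_abs _ _ _ Hr Hq) as [Hx Hy].
  rewrite <- (point_at_coords q). apply Hsq; rewrite Rabs_minus_sym; assumption.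
Qed.

Lemma not_interior_at_max (w : region) H E :
  (forall p, w p -> height p <= H) -> height E = H -> ~ interior w E.
Proof.
  intros Hw HE [r [Hr Hball]].
  assert (Habove : w (point_at (abscissa E) (H + r / 2))).
  { apply Hball. rewrite dist2_coords, abscissa_point_at, height_point_at, HE, Rminus_diag. nra. }
  apply Hw in Habove. rewrite height_point_at in Habove. lra.
Qed.

Lemma corner_descends x y z H : ~ collinear x y z -> axis_aligned y z ->
  height x = H -> height y = H -> height z <= H -> abscissa z = abscissa y /\ height z < H.
Proof.
  intros Hnc Hyz Hx Hy Hz.
  destruct (aligned_coords y z Hyz) as [E|E].
  - split; [congruence|]. destruct (Rle_lt_or_eq_dec _ _ Hz) as [|E']; [assumption|].
    exfalso; apply Hnc, same_height_collinear; congruence.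
  - exfalso; apply Hnc, same_height_collinear; congruence.
Qed.

Lemma seg_point_at_height p q Y : abscissa p = abscissa q ->
  between (height p) (height q) Y -> seg p q (point_at (abscissa p) Y).
Proof.
  intros Hpq HY. destruct (seg_ivt height height_affine p q Y HY) as [z [Hz HzY]].
  destruct (seg_affine abscissa abscissa_affine p q z Hz) as [t [_ Hzt]].
  replace (point_at (abscissa p) Y) with z; [exact Hz|].
  apply coords_inj; rewrite ?abscissa_point_at, ?height_point_at; [|exact HzY].
  rewrite Hzt, Hpq. ring.
Qed.

Lemma rect_convex_level_segment V (w : region) p q m : rect_convex V w -> w p -> w q ->
  height p = height q -> between (abscissa p) (abscissa q) m -> w (point_at m (height p)).
Proof.
  intros [_ Hconv] Hp Hq Hpq Hm. destruct (Hconv p q Hp Hq) as [l [Hsh Hin]].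
  apply Hin, (shortest_rpath_covers_level_segment p q l m); assumption.
Qed.

Lemma interior_of_level_strip (w : region) x1 x2 y1 y2 Y : x1 <> x2 -> y1 < Y < y2 ->
  (forall x y, between x1 x2 x -> y1 < y < y2 -> w (point_at x y)) ->
  interior w (point_at ((x1 + x2) / 2) Y).
Proof.
  intros Hx HY Hstrip.
  set (r := Rmin (Rabs (x2 - x1) / 2) (Rmin (y2 - Y) (Y - y1))).
  assert (Hd : 0 < Rabs (x2 - x1)) by (apply Rabs_pos_lt; lra).
  assert (Hr : 0 < r) by (unfold r; repeat apply Rmin_glb_lt; lra).
  assert (Hr1 : r <= Rabs (x2 - x1) / 2) by apply Rmin_l.
  assert (Hr2 : r <= y2 - Y) by (eapply Rle_trans; [apply Rmin_r|apply Rmin_l]).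
  assert (Hr3 : r <= Y - y1) by (eapply Rle_trans; [apply Rmin_r|apply Rmin_r]).
  apply (interior_of_square w _ _ r Hr). intros x y Hxr Hyr. apply Hstrip.
  - revert Hxr Hr1. unfold between, Rabs; repeat destruct Rcase_abs; intros;
    first [left; split; lra | right; split; lra].
  - revert Hyr. unfold Rabs; destruct Rcase_abs; intros; lra.
Qed.

Lemma skeleton_meets_level (w : region) Sk P Q m : skeleton w Sk ->
  ~ interior w P -> ~ interior w Q -> height P = height Q ->
  between (abscissa P) (abscissa Q) m -> interior w (point_at m (height P)) ->
  exists s x, In s Sk /\ seg_of s x /\ height x = height P.
Proof.
  intros [_ Hsk] HP HQ HPQ Hm Hint.
  destruct (Hsk P Q HP HQ) with (l := [Q]) as [s [x [Hs [Hx Hpx]]]].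
  - intros l Hsh _. exists (point_at m (height P)). split; [|exact Hint].
    apply (shortest_rpath_covers_level_segment P Q l m); assumption.
  - apply aligned_shortest_rpath, same_height_aligned, HPQ.
  - apply single_segment_at_most_one_corner.
  - exists s, x. split; [exact Hs|]. split; [exact Hx|].
    destruct Hpx as [Hpx| ->]; [|symmetry; exact HPQ].
    destruct (seg_affine height height_affine P Q x Hpx) as [t [_ ->]]. rewrite HPQ. ring.
Qed.

Lemma segments_reaching_all_levels (w : region) Sk H y0 : inside w Sk ->
  (forall p, w p -> height p <= H) -> y0 < H ->
  (forall Y, y0 < Y < H -> exists s x, In s Sk /\ seg_of s x /\ height x = Y) ->
  exists s, In s Sk /\ (height (fst s) = H \/ height (snd s) = H).
Proof.
  intros Hin Hw Hy0 Hhit. apply NNPP. intros Hnone.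
  assert (Hlow : forall s, In s Sk -> Rmax (height (fst s)) (height (snd s)) < H).
  { intros s Hs.
    assert (height (fst s) <= H) by (apply Hw, (Hin s); [exact Hs|apply seg_start]).
    assert (height (snd s) <= H) by (apply Hw, (Hin s); [exact Hs|apply seg_end]).
    apply Rmax_lub_lt; apply Rnot_le_lt; intros Hge; apply Hnone; exists s; split; auto; lra. }
  destruct (finite_max_below Sk _ H Hlow) as [m [Hm Hbound]].
  set (Y := (Rmax m y0 + H) / 2).
  pose proof (Rmax_l m y0). pose proof (Rmax_r m y0). pose proof (Rmax_lub_lt m y0 H Hm Hy0).
  destruct (Hhit Y) as [s [x [Hs [Hx HxY]]]]; [unfold Y; lra|].
  assert (height x <= m).
  { pose proof (Hbound s Hs). pose proof (Rmax_l (height (fst s)) (height (snd s))).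
    pose proof (Rmax_r (height (fst s)) (height (snd s))).
    apply (seg_affine_le height height_affine _ _ _ _ Hx); lra. }
  unfold Y in HxY. lra.
Qed.

Lemma top_points_on_edge V w H i E : is_obstacle V w -> (i < length V)%nat ->
  (forall p, w p -> height p <= H) -> height (vtx V i) = H -> height (vtx V (S i)) = H ->
  w E -> height E = H -> edge_of V i E.
Proof.
  intros Hob Hi Hw Ha Hb HE HEH.
  destruct (neighbour_indices_distinct (length V) i (obstacle_length V w Hob) Hi) as [Hii _].
  assert (Hvtx : forall k, height (vtx V k) = H -> vtx V k = vtx V i \/ vtx V k = vtx V (S i)).
  { intros k Hk.
    destruct (Nat.eq_dec (k mod length V) (i mod length V)) as [K|K];
      [left; rewrite <- (vtx_mod V k), <- (vtx_mod V i), K; reflexivity|].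
    destruct (Nat.eq_dec (k mod length V) (S i mod length V)) as [K'|K'];
      [right; rewrite <- (vtx_mod V k), <- (vtx_mod V (S i)), K'; reflexivity|].
    exfalso. apply (vtx_not_collinear V w Hob i (S i) k); try lia.
    apply same_height_collinear; congruence. }
  assert (Hends : forall p, p = vtx V i \/ p = vtx V (S i) -> edge_of V i p).
  { intros p [-> | ->]; [apply seg_start|apply seg_end]. }
  destruct (frontier_on_edge V w Hob E) as [j Hj].
  { split; [|exact (not_interior_at_max w H E Hw HEH)].
    intros e He. exists E. split; [|exact HE]. unfold dist2. rewrite !Rminus_diag. nra. }
  destruct (seg_affine_max_cases height height_affine _ _ E H Hj
              (Hw _ (vtx_in_obstacle V w Hob j)) (Hw _ (vtx_in_obstacle V w Hob (S j))) HEH)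
    as [[Hj1 Hj2]|[-> | ->]]; [|apply Hends, Hvtx; assumption..].
  unfold edge_of in Hj.
  destruct (Hvtx j Hj1) as [E1|E1], (Hvtx (S j) Hj2) as [E2|E2]; rewrite E1, E2 in Hj.
  - apply Hends; left; exact (seg_degenerate _ _ Hj).
  - exact Hj.
  - exact (seg_sym _ _ _ Hj).
  - apply Hends; right; exact (seg_degenerate _ _ Hj).
Qed.

Lemma side_edges_below_top V w H i : is_obstacle V w -> rectilinear V -> (i < length V)%nat ->
  (forall p, w p -> height p <= H) -> height (vtx V i) = H -> height (vtx V (S i)) = H ->
  exists y0, y0 < H /\ forall Y, y0 < Y < H ->
    edge_of V (i + (length V - 1)) (point_at (abscissa (vtx V i)) Y) /\
    edge_of V (S i) (point_at (abscissa (vtx V (S i))) Y).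
Proof.
  intros Hob Hrect Hi Hw Ha Hb. pose proof (obstacle_length V w Hob) as Hn.
  destruct (neighbour_indices_distinct (length V) i Hn Hi) as (D1 & D2 & D3 & D4 & D5).
  set (a := vtx V i) in *. set (b := vtx V (S i)) in *.
  set (c := vtx V (S (S i))). set (d := vtx V (i + (length V - 1))).
  assert (Hda : vtx V (S (i + (length V - 1))) = a) by (apply vtx_pred; lia).
  destruct (corner_descends a b c H) as [Hc1 Hc2]; try assumption.
  { apply (vtx_not_collinear V w Hob); assumption. }
  { apply vtx_aligned; [exact Hrect|lia]. }
  { apply Hw, (vtx_in_obstacle V w Hob). }
  destruct (corner_descends b a d H) as [Hd1 Hd2]; try assumption.
  { apply (vtx_not_collinear V w Hob); auto. }
  { apply axis_aligned_sym. rewrite <- Hda. apply vtx_aligned; [exact Hrect|lia]. }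
  { apply Hw, (vtx_in_obstacle V w Hob). }
  exists (Rmax (height c) (height d)). split; [apply Rmax_lub_lt; assumption|].
  intros Y [HY1 HY2]. pose proof (Rmax_l (height c) (height d)).
  pose proof (Rmax_r (height c) (height d)). split.
  - unfold edge_of. rewrite Hda. change (seg d a (point_at (abscissa a) Y)).
    rewrite <- Hd1. apply seg_point_at_height; [exact Hd1|left; split; lra].
  - change (seg b c (point_at (abscissa b) Y)).
    apply seg_point_at_height; [symmetry; exact Hc1|right; split; lra].
Qed.

Lemma top_edge_skeleton_endpoint V w Sk H i :
  is_obstacle V w -> rect_convex V w -> skeleton w Sk -> (i < length V)%nat ->
  (forall p, w p -> height p <= H) -> height (vtx V i) = H -> height (vtx V (S i)) = H ->
  abscissa (vtx V i) <> abscissa (vtx V (S i)) ->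
  exists s, In s Sk /\ (edge_of V i (fst s) \/ edge_of V i (snd s)).
Proof.
  intros Hob Hconv Hsk Hi Hw Ha Hb Hab.
  set (xa := abscissa (vtx V i)) in *. set (xb := abscissa (vtx V (S i))) in *.
  destruct (side_edges_below_top V w H i Hob (proj1 Hconv) Hi Hw Ha Hb) as [y0 [Hy0 Hsides]].
  assert (Hstrip : forall x Y, between xa xb x -> y0 < Y < H -> w (point_at x Y)).
  { intros x Y Hx HY. destruct (Hsides Y HY) as [HP HQ].
    pose proof (rect_convex_level_segment V w (point_at xa Y) (point_at xb Y) x Hconv) as Hseg.
    rewrite !abscissa_point_at, !height_point_at in Hseg.
    apply Hseg; [eapply edge_in_obstacle; eassumption ..|reflexivity|exact Hx]. }
  assert (Hlevels : forall Y, y0 < Y < H -> exists s x, In s Sk /\ seg_of s x /\ height x = Y).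
  { intros Y HY. destruct (Hsides Y HY) as [HP HQ].
    destruct (skeleton_meets_level w Sk (point_at xa Y) (point_at xb Y) ((xa + xb) / 2) Hsk)
      as [s [x [Hs [Hx Hhx]]]];
      rewrite ?abscissa_point_at, ?height_point_at in *; try reflexivity.
    - eapply edge_not_interior; eassumption.
    - eapply edge_not_interior; eassumption.
    - unfold between. destruct (Rle_dec xa xb); [left|right]; split; lra.
    - apply (interior_of_level_strip w xa xb y0 H); assumption.
    - exists s, x. auto. }
  destruct (segments_reaching_all_levels w Sk H y0 (proj1 Hsk) Hw Hy0 Hlevels)
    as [s [Hs Htop]].
  exists s. split; [exact Hs|].
  destruct Htop; [left|right]; apply (top_points_on_edge V w H i); try assumption;
    apply (proj1 Hsk s); [exact Hs|apply seg_start|exact Hs|apply seg_end].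
Qed.
End Orientation.

Lemma rect_interior x1 x2 y1 y2 x y : x1 < x < x2 -> y1 < y < y2 ->
  interior (rect x1 x2 y1 y2) (x, y).
Proof.
  intros Hx Hy. change (x, y) with (point_at false false x y).
  set (r := Rmin (Rmin (x - x1) (x2 - x)) (Rmin (y - y1) (y2 - y))).
  assert (Hr : 0 < r) by (unfold r; repeat apply Rmin_glb_lt; lra).
  assert (r <= x - x1) by (eapply Rle_trans; [apply Rmin_l|apply Rmin_l]).
  assert (r <= x2 - x) by (eapply Rle_trans; [apply Rmin_l|apply Rmin_r]).
  assert (r <= y - y1) by (eapply Rle_trans; [apply Rmin_r|apply Rmin_l]).
  assert (r <= y2 - y) by (eapply Rle_trans; [apply Rmin_r|apply Rmin_r]).
  apply (interior_of_square false false _ x y r Hr). intros x' y'.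
  unfold rect, Rabs; simpl; repeat destruct Rcase_abs; intros; repeat split; lra.
Qed.

Lemma extreme_edge_on_top V w i : is_obstacle V w -> rectilinear V -> extreme_edge V w i ->
  exists swap flip H, (forall p, w p -> height swap flip p <= H) /\
    height swap flip (vtx V i) = H /\ height swap flip (vtx V (S i)) = H /\
    abscissa swap (vtx V i) <> abscissa swap (vtx V (S i)).
Proof.
  intros Hob Hrect [Hi [x1 [x2 [y1 [y2 [[Hbox _] Hfr]]]]]].
  destruct (neighbour_indices_distinct (length V) i (obstacle_length V w Hob) Hi)
    as (D1 & D2 & D3 & _).
  set (a := vtx V i) in *. set (b := vtx V (S i)) in *.
  assert (Hab : a <> b).
  { intros E. apply (vtx_not_collinear V w Hob i (S i) (S (S i))); auto.
    fold a b. rewrite E. unfold collinear. ring. }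
  assert (Ra : rect x1 x2 y1 y2 a) by apply Hbox, (vtx_in_obstacle V w Hob).
  assert (Rb : rect x1 x2 y1 y2 b) by apply Hbox, (vtx_in_obstacle V w Hob).
  assert (HM : ~ interior (rect x1 x2 y1 y2)
                 (fst a + / 2 * (fst b - fst a), snd a + / 2 * (snd b - snd a))).
  { apply Hfr. exists (/ 2). split; [lra|reflexivity]. }
  unfold rect in Ra, Rb.
  destruct (vtx_aligned V i Hrect ltac:(lia)) as [E|E]; fold a b in E.
  - assert (Hs : snd a <> snd b) by (intros E'; apply Hab, injective_projections; auto).
    destruct (Req_dec (fst a) x1) as [A1|A1];
      [exists true, true, (- x1); simpl; repeat split; try lra;
       intros p Hp; destruct (Hbox p Hp); lra|].
    destruct (Req_dec (fst a) x2) as [A2|A2];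
      [exists true, false, x2; simpl; repeat split; try lra;
       intros p Hp; destruct (Hbox p Hp); lra|].
    exfalso. apply HM, rect_interior; [lra|].
    destruct (Rdichotomy _ _ Hs); split; lra.
  - assert (Hs : fst a <> fst b) by (intros E'; apply Hab, injective_projections; auto).
    destruct (Req_dec (snd a) y1) as [A1|A1];
      [exists false, true, (- y1); simpl; repeat split; try lra;
       intros p Hp; destruct (Hbox p Hp); lra|].
    destruct (Req_dec (snd a) y2) as [A2|A2];
      [exists false, false, y2; simpl; repeat split; try lra;
       intros p Hp; destruct (Hbox p Hp); lra|].
    exfalso. apply HM, rect_interior; [|lra].
    destruct (Rdichotomy _ _ Hs); split; lra.
Qed.

Theorem lemma2 (V : list pt) (w : region) (S : list (pt * pt)) :
  is_obstacle V w -> rect_convex V w -> skeleton w S ->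
  forall i, extreme_edge V w i ->
    exists s, In s S /\ (edge_of V i (fst s) \/ edge_of V i (snd s)).
Proof.
  intros Hob Hconv Hsk i Hext.
  destruct (extreme_edge_on_top V w i Hob (proj1 Hconv) Hext)
    as (swap & flip & H & Hbelow & Ha & Hb & Hab).
  exact (top_edge_skeleton_endpoint swap flip V w S H i Hob Hconv Hsk (proj1 Hext)
           Hbelow Ha Hb Hab).
Qed.
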